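(* If $X$ is a Cayley graph on a finite abelian group with $X\cong K_3\,\square\,K_3\,\square\,K_2$, then $\mathcal H(X)=\mathcal E(X)$.
   Context: $\square$ denotes the Cartesian product of graphs; $K_n$ is the complete graph on $n$ vertices. For a Cayley graph $X=\mathrm{Cay}(G;S)$ (vertex set $G$, edges $\{g,gs\}$), a flow is $f:G\times S\to\mathbb Z$ with $f(v,s)=-f(vs,s^{-1})$ and $\sum_sf(v,s)=0$; $\mathcal E(X)$ is the group of flows whose edge-flows (one orientation per edge) have even sum; oriented cycles are identified with flows ($1$ on their oriented edges, $-1$ on reversals); $\mathcal H(X)$ is the subgroup generated by oriented hamiltonian cycles. *)

From HB Require Import structures.
From mathcomp Require Import all_boot all_order all_algebra all_fingroup.
Set Implicit Arguments. Unset Strict Implicit. Unset Printing Implicit Defensive.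
Import GRing.Theory Num.Theory.
Local Open Scope ring_scope.

Definition Kn (n : nat) : rel 'I_n := fun i j => i != j.
Arguments Kn n : clear implicits.

Definition boxrel (T1 T2 : eqType) (e1 : rel T1) (e2 : rel T2) : rel (T1 * T2) :=
  fun x y => (e1 x.1 y.1 && (x.2 == y.2)) || ((x.1 == y.1) && e2 x.2 y.2).

Definition graph_iso (T1 T2 : finType) (e1 : rel T1) (e2 : rel T2) : Prop :=
  exists phi : T1 -> T2, bijective phi /\ forall x y, e1 x y = e2 (phi x) (phi y).

Section Cayley.
Variables (gT : finGroupType) (S : {set gT}).

Definition cay_adj : rel gT := fun x y => (x^-1 * y)%g \in S.

(* Functions G x S -> Z, represented on gT * gT and extended by 0 off S. *)
Definition flowfun := {ffun gT * gT -> int}.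

Definition is_flow (f : flowfun) : Prop :=
  [/\ forall v s, s \notin S -> f (v, s) = 0,
      forall v s, s \in S -> f (v, s) = - f ((v * s)%g, (s^-1)%g) &
      forall v, \sum_(s in S) f (v, s) = 0].

(* Sum of the edge-flows, each edge {v, v s} oriented from the endpoint
   of smaller enum_rank to the one of larger enum_rank. *)
Definition edge_flow_sum (f : flowfun) : int :=
  \sum_(v : gT) \sum_(s in S | (enum_rank v < enum_rank (v * s)%g)%N) f (v, s).

Definition in_E (f : flowfun) : Prop := is_flow f /\ (2 %| edge_flow_sum f)%Z.

(* The flow of the oriented cycle given by the cyclic vertex sequence c:
   1 on its oriented edges, -1 on their reversals, 0 elsewhere. *)
Definition cycle_flow (c : seq gT) : flowfun :=
  [ffun p : gT * gT =>
     if p.2 \in S then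
       (nat_of_bool ((p.1 \in c) && (next c p.1 == (p.1 * p.2)%g)))%:Z
     - (nat_of_bool (((p.1 * p.2)%g \in c) && (next c (p.1 * p.2)%g == p.1)))%:Z
     else 0].

Definition ham_cycle (c : seq gT) : Prop :=
  [/\ uniq c, size c = #|gT| & path.cycle cay_adj c].

Definition in_H (f : flowfun) : Prop :=
  exists l : seq (int * seq gT),
    (forall p, p \in l -> ham_cycle p.2) /\
    f = \sum_(p <- l) (cycle_flow p.2) *~ p.1.

End Cayley.

From HB Require Import structures.
From mathcomp Require Import all_boot all_order all_algebra all_fingroup zify ring.
Set Implicit Arguments. Unset Strict Implicit. Unset Printing Implicit Defensive.
Import GRing.Theory Num.Theory.
Local Open Scope ring_scope.

(* Hamiltonian cycles of an 18-vertex graph have even length, so their flows have even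
   edge sum: H(X) is contained in E(X).  Conversely, everything transports along the
   isomorphism to K3 x K3 x K2, where a Hamiltonian path is taken as spanning tree, so that
   a flow is determined by its values on the 28 non-tree edges.  Twenty-seven Hamiltonian
   cycles form a unitriangular system on all of them but one, whose fundamental cycle has
   odd length 7.  Reducing a flow of E(X) by this system leaves a multiple m of that odd
   cycle, and the parity of the edge sum forces m to be even; one more Hamiltonian cycle
   reduces to exactly twice the odd cycle. *)

Lemma andb_mem_next (T : eqType) (c : seq T) x y :
  x != y -> (x \in c) && (next c x == y) = (next c x == y).
Proof. by move=> nxy; case xc: (x \in c) => //=; rewrite next_nth xc (negbTE nxy). Qed.

Section GraphFlows.
Variables (T : finType) (e : rel T).

Definition is_gflow (F : T -> T -> int) : Prop :=
  (forall x y, e x y -> F y x = - F x y) /\ (forall x, \sum_(y | e x y) F x y = 0).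

Definition cycle_gflow (c : seq T) (x y : T) : int :=
  ((next c x == y) : nat)%:Z - ((next c y == x) : nat)%:Z.

Definition lincomb (A : Type) (F : A -> T -> T -> int) (l : seq (int * A)) (x y : T) : int :=
  \sum_(p <- l) p.1 * F p.2 x y.

Definition edge_sum (r : T -> nat) (F : T -> T -> int) : int :=
  \sum_x \sum_(y | e x y && (r x < r y)%N) F x y.

Definition hamiltonian (c : seq T) : Prop := [/\ uniq c, size c = #|T| & path.cycle e c].

Definition ham_comb (F : T -> T -> int) : Prop :=
  exists l : seq (int * seq T), (forall p, p \in l -> hamiltonian p.2) /\
    forall x y, e x y -> F x y = lincomb cycle_gflow l x y.

Lemma gflowB F G : is_gflow F -> is_gflow G -> is_gflow (fun x y => F x y - G x y).
Proof.
move=> [Fanti Fsum] [Ganti Gsum]; split=> [x y exy|x].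
  by rewrite Fanti // Ganti //; ring.
by rewrite sumrB Fsum Gsum subrr.
Qed.

Lemma gflowZ k F : is_gflow F -> is_gflow (fun x y => k * F x y).
Proof.
move=> [Fanti Fsum]; split=> [x y exy|x]; first by rewrite Fanti // mulrN.
by rewrite -mulr_sumr Fsum mulr0.
Qed.

Lemma gflow_lincomb (A : eqType) (F : A -> T -> T -> int) (l : seq (int * A)) :
  (forall p, p \in l -> is_gflow (F p.2)) -> is_gflow (lincomb F l).
Proof.
move=> Fl; split=> [x y exy|x].
  rewrite /lincomb -sumrN; apply: eq_big_seq => p /Fl[Fanti _].
  by rewrite Fanti // mulrN.
rewrite /lincomb exchange_big big1_seq //= => p /Fl[_ Fsum].
by rewrite -mulr_sumr Fsum mulr0.
Qed.

Lemma eq_edge_sum r F G :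
  (forall x y, e x y -> F x y = G x y) -> edge_sum r F = edge_sum r G.
Proof. by move=> FG; apply: eq_bigr => x _; apply: eq_bigr => y /andP[/FG]. Qed.

Lemma edge_sumB r F G :
  edge_sum r (fun x y => F x y - G x y) = edge_sum r F - edge_sum r G.
Proof. by rewrite /edge_sum -sumrB; apply: eq_bigr => x _; rewrite sumrB. Qed.

Lemma edge_sumZ r k F : edge_sum r (fun x y => k * F x y) = k * edge_sum r F.
Proof. by rewrite /edge_sum mulr_sumr; apply: eq_bigr => x _; rewrite mulr_sumr. Qed.

Lemma edge_sum_lincomb (A : Type) r (F : A -> T -> T -> int) (l : seq (int * A)) :
  edge_sum r (lincomb F l) = \sum_(p <- l) p.1 * edge_sum r (F p.2).
Proof.
rewrite /edge_sum /lincomb (eq_bigr _ (fun x _ => exchange_big _ _ _ _ _ _)) exchange_big.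
apply: eq_bigr => p _; rewrite mulr_sumr; apply: eq_bigr => x _.
by rewrite mulr_sumr.
Qed.

Lemma ham_comb_eq F G :
  (forall x y, e x y -> F x y = G x y) -> ham_comb G -> ham_comb F.
Proof. by move=> FG [l [hl Gl]]; exists l; split=> // x y exy; rewrite FG ?Gl. Qed.

Lemma ham_comb_cycle c : hamiltonian c -> ham_comb (cycle_gflow c).
Proof.
move=> hc; exists [:: (1, c)]; split=> [p|x y _]; first by rewrite inE => /eqP->.
by rewrite /lincomb big_seq1 mul1r.
Qed.

Lemma ham_combD F G :
  ham_comb F -> ham_comb G -> ham_comb (fun x y => F x y + G x y).
Proof.
move=> [l1 [h1 F1]] [l2 [h2 G2]]; exists (l1 ++ l2); split=> [p|x y exy].
  by rewrite mem_cat => /orP[/h1|/h2].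
by rewrite F1 // G2 // /lincomb big_cat.
Qed.

Lemma ham_combZ k F : ham_comb F -> ham_comb (fun x y => k * F x y).
Proof.
move=> [l [hl Fl]]; exists [seq (k * p.1, p.2) | p <- l]; split=> [p|x y exy].
  by case/mapP=> q /hl hq ->.
by rewrite Fl // /lincomb big_map mulr_sumr; apply: eq_bigr => p _; rewrite mulrA.
Qed.

Lemma ham_combB F G :
  ham_comb F -> ham_comb G -> ham_comb (fun x y => F x y - G x y).
Proof.
move=> hF /(ham_combZ (-1)) hG.
by apply: ham_comb_eq (ham_combD hF hG) => x y _; rewrite mulN1r.
Qed.

Section Triangular.
Variables (A : eqType) (F : A -> T -> T -> int).

Fixpoint triangular (rows : seq ((T * T) * A)) : bool :=
  if rows is (u, a) :: rs then
    [&& F a u.1 u.2 == 1, all (fun q => F q.2 u.1 u.2 == 0) rs & triangular rs]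
  else true.

(* Binding [k] keeps the evaluation of [reduce] linear rather than exponential in the rows. *)
Fixpoint reduce (rows : seq ((T * T) * A)) (y : T -> T -> int) : seq (int * A) :=
  if rows is (u, a) :: rs then
    let k := y u.1 u.2 in (k, a) :: reduce rs (fun v w => y v w - k * F a v w)
  else [::].

Lemma reduce_rows rows y : unzip2 (reduce rows y) = unzip2 rows.
Proof. by elim: rows y => [|[u a] rs IH] y //=; rewrite IH. Qed.

Lemma reduce_spec rows y : triangular rows ->
  forall u, u \in unzip1 rows -> y u.1 u.2 = lincomb F (reduce rows y) u.1 u.2.
Proof.
elim: rows y => [|[u a] rs IH] y //= /and3P[/eqP Fa /allP rs0 tri] w.
rewrite /lincomb big_cons /= inE => /orP[/eqP->|wrs].
  rewrite Fa mulr1 big_seq big1 ?addr0 // => q qin.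
  have : q.2 \in unzip2 (reduce rs (fun v w => y v w - y u.1 u.2 * F a v w)).
    exact: map_f.
  rewrite reduce_rows => /mapP[q' /rs0/eqP Fq' ->].
  by rewrite Fq' mulr0.
by have := IH _ tri w wrs; rewrite /lincomb /= => <-; rewrite addrC subrK.
Qed.

End Triangular.

Section Tree.
Variables (root : T) (parent : T -> T) (rank : T -> nat).
Hypothesis parent_adj : forall v, v != root -> e v (parent v).
Hypothesis parent_rank : forall v, v != root -> (rank (parent v) < rank v)%N.

Definition tree_edge (x y : T) : bool :=
  (x != root) && (y == parent x) || (y != root) && (x == parent y).

Lemma gflow_tree_eq0 F : is_gflow F ->
  (forall x y, e x y -> ~~ tree_edge x y -> F x y = 0) -> forall x y, e x y -> F x y = 0.
Proof.
move=> [Fanti Fsum] Fcotree.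
have Fparent v0 : v0 != root -> F v0 (parent v0) = 0.
  move=> nv0; apply/eqP; apply: contraT => Fv0.
  pose P v := (v != root) && (F v (parent v) != 0).
  have [v /andP[nv Fv] vmax] := @arg_maxnP T v0 P rank (introT andP (conj nv0 Fv0)).
  (* At a counterexample of maximal rank, conservation leaves only the edge to the parent. *)
  suff : F v (parent v) = 0 by move/eqP; rewrite (negbTE Fv).
  rewrite -(Fsum v) (bigD1 (parent v)) ?parent_adj //= big1 ?addr0 // => w /andP[evw nwv].
  case tvw: (tree_edge v w); last by rewrite Fcotree ?tvw.
  move: tvw; rewrite /tree_edge (negbTE nwv) andbF /= => /andP[nw /eqP vw].
  have ewv : e w v by rewrite vw parent_adj.
  rewrite (Fanti _ _ ewv) vw; apply/eqP; rewrite oppr_eq0; apply: contraT => Fw.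
  by have := vmax w; rewrite /P nw Fw => /(_ isT) /=; rewrite vw leqNgt parent_rank.
move=> x y exy; case txy: (tree_edge x y); last by rewrite Fcotree ?txy.
case/orP: txy => /andP[nr /eqP ->]; first exact: Fparent.
by rewrite Fanti ?parent_adj // Fparent ?oppr0.
Qed.

End Tree.

Section Simple.
Hypotheses (e_sym : symmetric e) (e_irr : irreflexive e).

Lemma eq_gflow F G : (forall x y, e x y -> F x y = G x y) -> is_gflow F -> is_gflow G.
Proof.
move=> FG [Fanti Fsum]; split=> [x y exy|x].
  have eyx : e y x by rewrite e_sym.
  by rewrite -(FG _ _ exy) -(FG _ _ eyx) Fanti.
by rewrite -[RHS](Fsum x); apply: eq_bigr => y /FG ->.
Qed.

Lemma sum_indicator (P : pred T) z : \sum_(y | P y) ((z == y) : nat)%:Z = (P z : nat)%:Z.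
Proof.
rewrite big_mkcond (bigD1 z) //= eqxx big1 ?addr0 => [|y /negbTE nzy].
  by case: (P z).
by rewrite eq_sym nzy; case: (P y).
Qed.

Lemma adj_next c x : path.cycle e c -> e x (next c x) = (x \in c).
Proof.
move=> cc; case xc: (x \in c); first exact: next_cycle.
by rewrite next_nth xc e_irr.
Qed.

Lemma adj_prev c x : path.cycle e c -> e x (prev c x) = (x \in c).
Proof.
move=> cc; case xc: (x \in c); first by rewrite e_sym prev_cycle.
by rewrite prev_nth xc e_irr.
Qed.

Lemma cycle_gflowP c : uniq c -> path.cycle e c -> is_gflow (cycle_gflow c).
Proof.
move=> uc cc; split=> [x y _|x]; first by rewrite /cycle_gflow opprB.
have next_eqE y : (next c y == x) = (prev c x == y).
  by rewrite eq_sym; apply/eqP/eqP => [->|<-]; rewrite ?prev_next ?next_prev.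
rewrite sumrB (eq_bigr _ (fun y _ => congr1 (fun b : bool => (b : nat)%:Z) (next_eqE y))).
by rewrite !sum_indicator adj_next // adj_prev // subrr.
Qed.

Lemma sum_adj_rank (r : T -> nat) (F : T -> T -> int) : injective r ->
  \sum_x \sum_(y | e x y) F x y = \sum_x \sum_(y | e x y && (r x < r y)%N) (F x y + F y x).
Proof.
move=> rinj; rewrite [RHS](eq_bigr (fun x => \sum_(y | e x y && (r x < r y)%N) F x y +
  \sum_(y | e x y && (r x < r y)%N) F y x)) => [|x _]; last by rewrite big_split.
rewrite big_split /=.
rewrite [X in _ = _ + X](exchange_big_dep xpredT) //= -big_split.
apply: eq_bigr => x _; rewrite (bigID (fun y => r x < r y)%N) /=; congr (_ + _).
apply: eq_bigl => y; rewrite e_sym; case exy: (e y x) => //=.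
rewrite -leqNgt leq_eqVlt orbC; case: ltnP => //= _.
by apply/eqP => /rinj yx; rewrite yx e_irr in exy.
Qed.

(* Each of the [size c] edges of [c] contributes [1] or [-1]. *)
Lemma edge_sum_cycle r c : injective r -> uniq c -> path.cycle e c ->
  (2 %| edge_sum r (cycle_gflow c) - (size c)%:Z)%Z.
Proof.
move=> rinj uc cc; pose A x y := ((next c x == y) : nat)%:Z.
set B := \sum_x \sum_(y | e x y && (r x < r y)%N) A y x.
have edges : \sum_x \sum_(y | e x y && (r x < r y)%N) (A x y + A y x) = (size c)%:Z.
  rewrite -sum_adj_rank // (eq_bigr _ (fun x _ => sum_indicator _ _)).
  rewrite -(card_uniqP uc) -sum1_card -natz natr_sum [RHS]big_mkcond /=.
  by apply: eq_bigr => x _; rewrite adj_next //; case: (x \in c).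
have -> : edge_sum r (cycle_gflow c) = (size c)%:Z - 2 * B.
  rewrite -edges /edge_sum /B mulr_sumr -sumrB; apply: eq_bigr => x _.
  by rewrite mulr_sumr -sumrB; apply: eq_bigr => y _; rewrite /cycle_gflow /A; ring.
by rewrite addrAC subrr add0r rpredN dvdz_mulr.
Qed.

Lemma edge_sum_rank r1 r2 (F : T -> T -> int) : injective r1 -> injective r2 ->
  (forall x y, e x y -> F y x = - F x y) ->
  (2 %| edge_sum r1 F - edge_sum r2 F)%Z.
Proof.
move=> r1inj r2inj Fanti.
pose G x y := if (r1 x < r1 y)%N then F x y else 0.
set B := \sum_x \sum_(y | e x y && (r2 x < r2 y)%N) G y x.
have -> : edge_sum r1 F = edge_sum r2 F + 2 * B.
  rewrite /edge_sum (eq_bigr (fun x => \sum_(y | e x y) G x y)); last first.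
    by move=> x _; rewrite big_mkcondr.
  rewrite (sum_adj_rank _ r2inj) /B mulr_sumr -big_split; apply: eq_bigr => x _.
  rewrite mulr_sumr -big_split; apply: eq_bigr => y /andP[exy _]; rewrite /G (Fanti _ _ exy).
  have : r1 x != r1 y by apply: contraTneq exy => /r1inj ->; rewrite e_irr.
  by case: ltngtP => // _ _ /=; ring.
by rewrite addrAC subrr add0r dvdz_mulr.
Qed.

Lemma ham_comb_gflow F : ham_comb F -> is_gflow F.
Proof.
case=> l [hl Fl]; apply: eq_gflow (fun x y exy => esym (Fl x y exy)) _.
apply: gflow_lincomb => p pl; have [uc _ cc] := hl p pl.
exact: cycle_gflowP.
Qed.

Lemma ham_comb_edge_sum r F : injective r -> ~~ odd #|T| -> ham_comb F ->
  (2 %| edge_sum r F)%Z.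
Proof.
move=> rinj evenT [l [hl Fl]]; rewrite (eq_edge_sum r Fl) edge_sum_lincomb.
rewrite big_seq; apply: rpred_sum => p pl; have [uc sc cc] := hl p pl.
apply: dvdz_mull.
rewrite -[edge_sum _ _](subrK (size p.2)%:Z) rpredD ?edge_sum_cycle //.
by rewrite sc dvdzE /= dvdn2.
Qed.

End Simple.
End GraphFlows.

Arguments cycle_gflow {T} c x y.

Section Isomorphism.
Variables (T1 T2 : finType) (e1 : rel T1) (e2 : rel T2) (phi : T1 -> T2) (psi : T2 -> T1).
Hypotheses (phiK : cancel phi psi) (psiK : cancel psi phi).
Hypothesis e12 : forall x y, e1 x y = e2 (phi x) (phi y).

Let phi_bij : bijective phi := Bijective phiK psiK.

Lemma e21 x y : e2 x y = e1 (psi x) (psi y).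
Proof. by rewrite e12 !psiK. Qed.

Lemma gflow_iso F : is_gflow e1 F -> is_gflow e2 (fun x y => F (psi x) (psi y)).
Proof.
move=> [Fanti Fsum]; split=> [x y|x]; first by rewrite e21 => /Fanti.
rewrite -[RHS](Fsum (psi x)) (reindex phi) /=; last exact: onW_bij.
by apply: eq_big => [y|y _]; rewrite ?e21 phiK.
Qed.

Lemma edge_sum_iso r F :
  edge_sum e1 (r \o phi) F = edge_sum e2 r (fun x y => F (psi x) (psi y)).
Proof.
rewrite /edge_sum (reindex phi) /=; last exact: onW_bij.
apply: eq_bigr => x _; rewrite (reindex phi) /=; last exact: onW_bij.
by apply: eq_big => [y|y _]; rewrite ?e12 ?phiK.
Qed.

Lemma hamiltonian_iso c : hamiltonian e2 c -> hamiltonian e1 (map psi c).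
Proof.
case=> uc sc cc; split; first by rewrite map_inj_uniq //; apply: can_inj psiK.
  by rewrite size_map sc (bij_eq_card phi_bij).
by rewrite path.cycle_map; apply: sub_cycle cc => x y; rewrite /= e21.
Qed.

Lemma cycle_gflow_iso c x y : uniq c ->
  cycle_gflow (map psi c) x y = cycle_gflow c (phi x) (phi y).
Proof.
move=> uc; have next_psi z : next (map psi c) z = psi (next c (phi z)).
  by rewrite -{1}[z]phiK next_map //; apply: can_inj psiK.
have psi_eq z t : (psi z == t) = (z == phi t).
  by rewrite -(inj_eq (can_inj phiK)) psiK.
by rewrite /cycle_gflow !next_psi !psi_eq.
Qed.

Lemma ham_comb_iso F : ham_comb e2 F -> ham_comb e1 (fun x y => F (phi x) (phi y)).
Proof.
case=> l [hl Fl]; exists [seq (p.1, map psi p.2) | p <- l]; split=> [p|x y exy].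
  by case/mapP=> q /hl hq ->; apply: hamiltonian_iso.
rewrite Fl -?e12 // /lincomb big_map; apply: eq_big_seq => p pl.
have [uc _ _] := hl p pl.
by rewrite cycle_gflow_iso.
Qed.

End Isomorphism.

Section CayleyFlows.
Variables (gT : finGroupType) (S : {set gT}).
Hypotheses (S1 : (1 \notin S)%g) (Sinv : forall s, s \in S -> (s^-1 \in S)%g).

Lemma cay_adj_sym : symmetric (cay_adj S).
Proof.
move=> v w; rewrite /cay_adj; apply/idP/idP => /Sinv; by rewrite invMg invgK.
Qed.

Lemma cay_adj_irr : irreflexive (cay_adj S).
Proof. by move=> v; rewrite /cay_adj mulVg (negbTE S1). Qed.

Definition cay_rank (v : gT) : nat := enum_rank v.

Lemma cay_rank_inj : injective cay_rank.
Proof. by move=> v w /val_inj/enum_rank_inj. Qed.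

Definition cay_gflow (f : flowfun gT) (v w : gT) : int := f (v, v^-1 * w)%g.

Lemma sum_cay v (P : pred gT) (h : gT -> int) :
  \sum_(s in S | P (v * s)%g) h s = \sum_(w | cay_adj S v w && P w) h (v^-1 * w)%g.
Proof.
by rewrite [RHS](reindex_inj (mulgI v)); apply: eq_big => s; rewrite /cay_adj mulKg.
Qed.

Lemma sum_cay_adj v (h : gT -> int) :
  \sum_(s in S) h s = \sum_(w | cay_adj S v w) h (v^-1 * w)%g.
Proof.
by rewrite [RHS](reindex_inj (mulgI v)); apply: eq_big => s; rewrite /cay_adj mulKg.
Qed.

Lemma is_flowE f : is_flow S f <->
  (forall v s, s \notin S -> f (v, s) = 0) /\ is_gflow (cay_adj S) (cay_gflow f).
Proof.
split=> [[f0 fanti fsum]|[f0 [Fanti Fsum]]]; split=> //.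
- split=> [v w vw|v]; first by rewrite /cay_gflow (fanti _ _ vw) mulKVg invMg invgK opprK.
  by rewrite -[RHS](fsum v) (sum_cay_adj v).
- move=> v s sS; have vs : cay_adj S v (v * s)%g by rewrite /cay_adj mulKg.
  by have := Fanti _ _ vs; rewrite /cay_gflow mulKg invMg mulgKV => ->; rewrite opprK.
- by move=> v; rewrite -[RHS](Fsum v) (sum_cay_adj v).
Qed.

Lemma edge_flow_sumE f :
  edge_flow_sum S f = edge_sum (cay_adj S) cay_rank (cay_gflow f).
Proof. by apply: eq_bigr => v _; rewrite (sum_cay v (fun w => cay_rank v < cay_rank w)%N). Qed.

Lemma in_EE f : in_E S f <->
  [/\ forall v s, s \notin S -> f (v, s) = 0, is_gflow (cay_adj S) (cay_gflow f)
    & (2 %| edge_sum (cay_adj S) cay_rank (cay_gflow f))%Z].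
Proof.
rewrite /in_E is_flowE edge_flow_sumE.
by split=> [[[f0 Ff] Fpar]|[f0 Ff Fpar]].
Qed.

Lemma cycle_flowE c v s : s \in S -> cycle_flow S c (v, s) = cycle_gflow c v (v * s)%g.
Proof.
move=> sS; have nvs : v != (v * s)%g.
  by rewrite -{1}[v]mulg1 (inj_eq (mulgI v)); apply: contraNneq S1 => ->.
by rewrite ffunE /= sS !andb_mem_next // eq_sym.
Qed.

Lemma cycle_flow_combE (l : seq (int * seq gT)) v s :
  (\sum_(p <- l) cycle_flow S p.2 *~ p.1) (v, s) =
  if s \in S then lincomb cycle_gflow l v (v * s)%g else 0.
Proof.
rewrite sum_ffunE; case: ifP => sS.
  by apply: eq_bigr => p _; rewrite ffunMzE cycle_flowE // mulrzz mulrC.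
by rewrite big1 // => p _; rewrite ffunMzE ffunE /= sS mul0rz.
Qed.

Lemma in_HE f : in_H S f <->
  (forall v s, s \notin S -> f (v, s) = 0) /\ ham_comb (cay_adj S) (cay_gflow f).
Proof.
split=> [[l [hl ->]]|[f0 [l [hl Fl]]]].
  split=> [v s /negbTE sS|]; first by rewrite cycle_flow_combE sS.
  exists l; split=> // v w vw.
  by move: vw; rewrite /cay_adj /cay_gflow cycle_flow_combE => ->; rewrite mulKVg.
exists l; split=> //; apply/ffunP => -[v s]; rewrite cycle_flow_combE.
case: ifPn => [sS|/f0 //]; rewrite -Fl; first by rewrite /cay_gflow mulKg.
by rewrite /cay_adj mulKg.
Qed.

End CayleyFlows.

Lemma Kn_sym n : symmetric (Kn n).
Proof. by move=> i j; rewrite /Kn eq_sym. Qed.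

Lemma Kn_irr n : irreflexive (Kn n).
Proof. by move=> i; rewrite /Kn eqxx. Qed.

Lemma boxrel_sym (T1 T2 : eqType) (e1 : rel T1) (e2 : rel T2) :
  symmetric e1 -> symmetric e2 -> symmetric (boxrel e1 e2).
Proof. by move=> s1 s2 x y; rewrite /boxrel s1 s2 (eq_sym x.1) (eq_sym x.2). Qed.

Lemma boxrel_irr (T1 T2 : eqType) (e1 : rel T1) (e2 : rel T2) :
  irreflexive e1 -> irreflexive e2 -> irreflexive (boxrel e1 e2).
Proof. by move=> i1 i2 x; rewrite /boxrel i1 i2 !andbF. Qed.

Definition K332 : finType := (('I_3 * 'I_3) * 'I_2)%type.

Definition K332_adj : rel K332 := boxrel (boxrel (Kn 3) (Kn 3)) (Kn 2).

Lemma K332_adj_sym : symmetric K332_adj.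
Proof. by apply: boxrel_sym; [apply: boxrel_sym|]; apply: Kn_sym. Qed.

Lemma K332_adj_irr : irreflexive K332_adj.
Proof. by apply: boxrel_irr; [apply: boxrel_irr|]; apply: Kn_irr. Qed.

Lemma card_K332 : #|K332| = 18%N.
Proof. by rewrite !card_prod !card_ord. Qed.

Definition code (v : K332) : nat := (6 * v.1.1 + 2 * v.1.2 + v.2)%N.

Definition vert (n : nat) : K332 := ((inZp (n %/ 6), inZp (n %/ 2)), inZp n).

Lemma codeK : cancel code vert.
Proof.
case=> [[[a Ha] [b Hb]] [c Hc]]; rewrite /vert /code /=.
by congr ((_, _), _); apply/val_inj => /=; lia.
Qed.

Lemma code_inj : injective code.
Proof. exact: can_inj codeK. Qed.

Definition K332_vertices : seq K332 := map vert (iota 0 18).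

Lemma mem_K332_vertices v : v \in K332_vertices.
Proof.
rewrite -(codeK v) map_f // mem_iota add0n.
by case: v => [[[a Ha] [b Hb]] [c Hc]]; rewrite /code /=; lia.
Qed.

(* A Hamiltonian path, used as a spanning tree rooted at its first vertex. *)
Definition tree_path : seq K332 :=
  map vert [:: 0; 2; 3; 1; 5; 17; 11; 7; 13; 15; 9; 8; 10; 6; 12; 14; 16; 4].

Definition pivot (c : seq K332) : K332 * K332 := (nth (vert 0) c 0, nth (vert 0) c 1).

(* Hamiltonian cycles, each starting with its pivot edge, ordered so that each one avoids
   the pivot edges of those before it; the pivots are all non-tree edges except
   [vert 6 -- vert 7]. *)
Definition pivot_cycles : seq (seq K332) := map (map vert)
  [:: [:: 0; 1; 3; 2; 4; 5; 11; 7; 6; 10; 8; 9; 15; 13; 17; 16; 14; 12];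
   [:: 4; 5; 11; 9; 8; 10; 16; 14; 15; 17; 13; 12; 0; 6; 7; 1; 3; 2];
   [:: 3; 5; 1; 7; 9; 11; 17; 13; 15; 14; 16; 12; 0; 4; 10; 6; 8; 2];
   [:: 1; 13; 7; 9; 11; 5; 17; 15; 14; 16; 12; 0; 4; 10; 6; 8; 2; 3];
   [:: 1; 7; 9; 11; 5; 17; 13; 15; 14; 16; 12; 0; 4; 10; 6; 8; 2; 3];
   [:: 3; 15; 9; 8; 2; 14; 16; 12; 0; 4; 10; 6; 7; 13; 17; 11; 5; 1];
   [:: 3; 9; 8; 2; 14; 15; 13; 7; 6; 10; 4; 0; 12; 16; 17; 11; 5; 1];
   [:: 2; 14; 8; 9; 15; 13; 7; 6; 10; 4; 0; 12; 16; 17; 11; 5; 1; 3];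
   [:: 5; 11; 17; 16; 14; 12; 0; 4; 10; 6; 7; 13; 15; 9; 8; 2; 3; 1];
   [:: 2; 8; 9; 11; 7; 6; 10; 4; 0; 12; 16; 14; 15; 13; 17; 5; 1; 3];
   [:: 2; 4; 0; 12; 13; 15; 9; 8; 14; 16; 10; 6; 7; 11; 17; 5; 1; 3];
   [:: 16; 17; 5; 1; 3; 2; 0; 12; 13; 15; 14; 8; 9; 11; 7; 6; 10; 4];
   [:: 15; 17; 5; 1; 3; 2; 0; 4; 16; 14; 12; 13; 7; 11; 10; 6; 8; 9];
   [:: 0; 6; 12; 16; 4; 10; 11; 7; 9; 8; 14; 15; 13; 17; 5; 1; 3; 2];
   [:: 0; 12; 16; 4; 10; 11; 9; 7; 6; 8; 14; 15; 13; 17; 5; 1; 3; 2];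
   [:: 4; 10; 8; 14; 16; 12; 6; 7; 11; 9; 15; 13; 17; 5; 1; 3; 2; 0];
   [:: 12; 16; 4; 0; 2; 3; 1; 5; 17; 13; 15; 9; 11; 7; 6; 10; 8; 14];
   [:: 8; 14; 12; 6; 7; 11; 10; 16; 4; 0; 2; 3; 1; 5; 17; 13; 15; 9];
   [:: 9; 11; 7; 6; 8; 10; 16; 4; 0; 2; 3; 1; 5; 17; 13; 12; 14; 15];
   [:: 10; 16; 4; 0; 2; 3; 1; 5; 17; 13; 12; 14; 15; 9; 8; 6; 7; 11];
   [:: 6; 8; 10; 11; 7; 9; 15; 14; 16; 4; 0; 2; 3; 1; 5; 17; 13; 12];
   [:: 7; 9; 8; 10; 11; 17; 5; 1; 3; 2; 0; 4; 16; 14; 15; 13; 12; 6];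
   [:: 14; 15; 9; 8; 10; 6; 12; 13; 7; 11; 17; 5; 1; 3; 2; 0; 4; 16];
   [:: 12; 13; 15; 9; 8; 10; 6; 7; 11; 17; 5; 1; 3; 2; 0; 4; 16; 14];
   [:: 13; 17; 5; 1; 3; 2; 0; 4; 16; 14; 12; 6; 7; 11; 10; 8; 9; 15];
   [:: 10; 11; 17; 5; 1; 3; 2; 0; 4; 16; 14; 12; 6; 7; 13; 15; 9; 8];
   [:: 0; 4; 16; 14; 12; 6; 10; 8; 9; 15; 13; 7; 11; 17; 5; 1; 3; 2]].

Definition pivot_rows : seq ((K332 * K332) * seq K332) :=
  [seq (pivot c, c) | c <- pivot_cycles].

(* The fundamental cycle of the edge [vert 6 -> vert 7] of the tree, of odd length 7. *)
Definition odd_cycle : seq K332 := map vert [:: 7; 13; 15; 9; 8; 10; 6].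

(* A Hamiltonian cycle whose residual modulo the pivot rows is twice [odd_cycle]. *)
Definition extra_cycle : seq K332 :=
  map vert [:: 0; 1; 3; 2; 4; 5; 11; 7; 13; 17; 16; 14; 15; 9; 8; 10; 6; 12].

Lemma pivot_rows_triangular : triangular cycle_gflow pivot_rows.
Proof. by vm_compute. Qed.

Lemma K332_hamiltonian c : c \in extra_cycle :: pivot_cycles -> hamiltonian K332_adj c.
Proof.
have : all (fun c => [&& uniq c, size c == 18%N & path.cycle K332_adj c])
  (extra_cycle :: pivot_cycles) by vm_compute.
by move/allP => hc /hc /and3P[uc /eqP sc cc]; split; rewrite ?card_K332.
Qed.

Lemma tree_path_parent v : v != vert 0 ->
  K332_adj v (prev tree_path v) && (index (prev tree_path v) tree_path < index v tree_path)%N.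
Proof.
have : all (fun v => (v != vert 0) ==> K332_adj v (prev tree_path v) &&
  (index (prev tree_path v) tree_path < index v tree_path)%N) K332_vertices by vm_compute.
by move/allP/(_ v (mem_K332_vertices v))/implyP.
Qed.

Lemma K332_cotree x y : K332_adj x y ->
  [|| tree_edge (vert 0) (prev tree_path) x y, (x, y) \in unzip1 pivot_rows,
      (y, x) \in unzip1 pivot_rows, (x, y) == (vert 6, vert 7) | (y, x) == (vert 6, vert 7)].
Proof.
have : all (fun x => all (fun y => K332_adj x y ==>
  [|| tree_edge (vert 0) (prev tree_path) x y, (x, y) \in unzip1 pivot_rows,
      (y, x) \in unzip1 pivot_rows, (x, y) == (vert 6, vert 7) | (y, x) == (vert 6, vert 7)])
  K332_vertices) K332_vertices by vm_compute.
by move/allP/(_ x (mem_K332_vertices x))/allP/(_ y (mem_K332_vertices y))/implyP.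
Qed.

Lemma K332_gflow_eq F G : is_gflow K332_adj F -> is_gflow K332_adj G ->
  (forall u, u \in unzip1 pivot_rows -> F u.1 u.2 = G u.1 u.2) ->
  F (vert 6) (vert 7) = G (vert 6) (vert 7) ->
  forall x y, K332_adj x y -> F x y = G x y.
Proof.
move=> Ff Gf FGpiv FGodd x y xy; apply/eqP; rewrite -subr_eq0; apply/eqP.
have Df := gflowB Ff Gf; have [Danti _] := Df.
have D0 u : u \in unzip1 pivot_rows -> F u.1 u.2 - G u.1 u.2 = 0.
  by move=> /FGpiv ->; rewrite subrr.
have tadj v : v != vert 0 -> K332_adj v (prev tree_path v).
  by case/tree_path_parent/andP.
have trank v : v != vert 0 -> (index (prev tree_path v) tree_path < index v tree_path)%N.
  by case/tree_path_parent/andP.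
apply: (@gflow_tree_eq0 _ _ _ _ (index^~ tree_path) tadj trank _ Df) xy => u w uw.
have Dwu : F u w - G u w = - (F w u - G w u) by rewrite Danti // K332_adj_sym.
case/orP: (K332_cotree uw) => [->//|]; case/or4P => [/D0 //|/D0 wu|/eqP[-> ->]|/eqP[w6 u7]].
- by rewrite Dwu wu oppr0.
- by rewrite FGodd subrr.
- by rewrite Dwu w6 u7 FGodd subrr oppr0.
Qed.

Lemma odd_cycle_props :
  [/\ uniq odd_cycle, path.cycle K332_adj odd_cycle, size odd_cycle = 7%N,
      cycle_gflow odd_cycle (vert 6) (vert 7) = 1 &
      forall u, u \in unzip1 pivot_rows -> cycle_gflow odd_cycle u.1 u.2 = 0].
Proof.
have : all (fun u => cycle_gflow odd_cycle u.1 u.2 == 0) (unzip1 pivot_rows).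
  by vm_compute.
by move/allP=> piv0; split=> [||||u /piv0/eqP] //; vm_compute.
Qed.

Definition pivot_comb (y : K332 -> K332 -> int) : K332 -> K332 -> int :=
  lincomb cycle_gflow (reduce cycle_gflow pivot_rows y).

Lemma ham_comb_pivot_comb y : ham_comb K332_adj (pivot_comb y).
Proof.
exists (reduce cycle_gflow pivot_rows y); split=> // p pr.
have : p.2 \in unzip2 (reduce cycle_gflow pivot_rows y) by apply: map_f.
rewrite reduce_rows /unzip2 -map_comp map_id => pc.
by apply: K332_hamiltonian; rewrite inE pc orbT.
Qed.

Lemma pivot_residual y : is_gflow K332_adj y -> forall x z, K332_adj x z ->
  y x z - pivot_comb y x z =
  (y (vert 6) (vert 7) - pivot_comb y (vert 6) (vert 7)) * cycle_gflow odd_cycle x z.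
Proof.
have [odd_uniq odd_cc _ odd_at odd_piv] := odd_cycle_props.
move=> yf; apply: K332_gflow_eq => [||u pu|]; rewrite ?odd_at ?mulr1 //.
- exact/gflowB/(ham_comb_gflow K332_adj_sym K332_adj_irr (ham_comb_pivot_comb y)).
- exact/gflowZ/(cycle_gflowP K332_adj_sym K332_adj_irr odd_uniq odd_cc).
by rewrite odd_piv // mulr0 /pivot_comb -reduce_spec ?subrr //; apply: pivot_rows_triangular.
Qed.

Lemma extra_cycle_residual :
  cycle_gflow extra_cycle (vert 6) (vert 7)
  - pivot_comb (cycle_gflow extra_cycle) (vert 6) (vert 7) = 2.
Proof. by rewrite /pivot_comb /lincomb unlock; vm_compute. Qed.

Lemma K332_ham_comb F : is_gflow K332_adj F -> (2 %| edge_sum K332_adj code F)%Z ->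
  ham_comb K332_adj F.
Proof.
move=> Ff Fpar; have [odd_uniq odd_cc odd_size _ _] := odd_cycle_props.
have ham_extra : hamiltonian K332_adj extra_cycle.
  by apply: K332_hamiltonian; rewrite inE eqxx.
have [uh _ ch] := ham_extra.
have h_res := pivot_residual (cycle_gflowP K332_adj_sym K332_adj_irr uh ch).
rewrite extra_cycle_residual in h_res.
have F_res := pivot_residual Ff.
set m := F (vert 6) (vert 7) - pivot_comb F (vert 6) (vert 7) in F_res.
have [n m_even] : exists n, m = n * 2.
  (* [F - pivot_comb F] has even edge sum, equal to [m] times an odd number. *)
  apply/dvdzP; rewrite -(@Gauss_dvdzl 2 m 7) //.
  have H_even : (2 %| edge_sum K332_adj code (fun x y => F x y - pivot_comb F x y))%Z.
    rewrite edge_sumB rpredB // (ham_comb_edge_sum K332_adj_sym K332_adj_irr code_inj) //.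
      by rewrite card_K332.
    exact: ham_comb_pivot_comb.
  rewrite (eq_edge_sum _ F_res) edge_sumZ in H_even.
  have := edge_sum_cycle K332_adj_sym K332_adj_irr code_inj odd_uniq odd_cc.
  rewrite odd_size; set X := edge_sum _ _ _ => X_odd.
  have -> : m * 7 = m * X - m * (X - 7) by ring.
  by rewrite rpredB // dvdz_mull.
apply: (ham_comb_eq _ (ham_combD (ham_comb_pivot_comb F) (ham_combZ n
  (ham_combB (ham_comb_cycle ham_extra) (ham_comb_pivot_comb (cycle_gflow extra_cycle)))))).
move=> x y xy /=.
by rewrite -[F x y](subrK (pivot_comb F x y)) F_res // h_res // m_even; ring.
Qed.

Lemma iso_K332_ham_comb (T : finType) (e : rel T) (r : T -> nat) (F : T -> T -> int) :
  graph_iso e K332_adj -> injective r -> is_gflow e F -> (2 %| edge_sum e r F)%Z ->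
  ham_comb e F.
Proof.
case=> phi [[psi phiK psiK] e12] rinj Ff Fpar.
have e_sym : symmetric e by move=> x y; rewrite !e12 K332_adj_sym.
have e_irr : irreflexive e by move=> x; rewrite e12 K332_adj_irr.
have Gpar : (2 %| edge_sum K332_adj code (fun x y => F (psi x) (psi y)))%Z.
  rewrite -(edge_sum_iso phiK psiK e12) -(rpredBl _ Fpar).
  apply: edge_sum_rank => //; first exact: inj_comp code_inj (can_inj phiK).
  by case: Ff.
have := K332_ham_comb (gflow_iso phiK psiK e12 Ff) Gpar.
by move/(ham_comb_iso phiK psiK e12); apply: ham_comb_eq => x y _; rewrite !phiK.
Qed.

Theorem corollary10p6 (gT : finGroupType) (S : {set gT}) :
  abelian [set: gT] ->
  (1 \notin S)%g ->
  (forall s, s \in S -> s^-1 \in S)%g ->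
  graph_iso (cay_adj S) (boxrel (boxrel (Kn 3) (Kn 3)) (Kn 2)) ->
  forall f : flowfun gT, in_H S f <-> in_E S f.
Proof.
move=> _ S1 Sinv iso f.
have even_order : ~~ odd #|gT|.
  by case: iso => phi [/bij_eq_card -> _]; rewrite !card_prod !card_ord.
have [cay_sym cay_irr] := (cay_adj_sym Sinv, cay_adj_irr S1).
rewrite in_HE // in_EE; split=> [[f0 Ff]|[f0 Ff Fpar]]; split=> //.
- exact: ham_comb_gflow cay_sym cay_irr _ Ff.
- exact (ham_comb_edge_sum cay_sym cay_irr (@cay_rank_inj gT) even_order Ff).
- exact: iso_K332_ham_comb iso (@cay_rank_inj gT) Ff Fpar.
Qed.
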